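(* Let $m$ and $\Delta$ be numbers such that $m$ and $\langle m;\Delta\rangle$ are numbers and $\langle m;\Delta\rangle$ is balanced. Then $\langle m;\Delta\rangle=m$.
   Context: Games are short normal-play combinatorial games, written $\{L\mid R\}$, with the usual disjunctive sum $+$ and equality of values. A number is a game $G$ with $G^L<G<G^R$ for all options; short number values are identified with dyadic rationals. For numbers $m,\Delta$, the ball $\langle m;\Delta\rangle$ is the game $\{x\mid y\}$ where $x$ and $y$ are the canonical forms of $m+\Delta$ and $m-\Delta$ respectively ($m$ is the midpoint, $\Delta$ the radius); balls are only considered when they are numbers, which forces $\Delta<0$. A ball $\langle m;\Delta\rangle$ is balanced if $\langle m;\Delta\rangle+\langle m;\Delta\rangle=m+m$. *)

From mathcomp Require Import all_boot all_order all_algebra.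
Set Implicit Arguments. Unset Strict Implicit. Unset Printing Implicit Defensive.
Import Order.TTheory GRing.Theory Num.Theory.

Inductive game : Type := Game : seq game -> seq game -> game.

Definition lopts (g : game) : seq game := let: Game l _ := g in l.
Definition ropts (g : game) : seq game := let: Game _ r := g in r.

(* lege x = (fun y => x <= y, fun y => y <= x), the usual recursive order:
   x <= y  iff  no x^L with y <= x^L  and no y^R with y^R <= x. *)
Fixpoint lege (x : game) : (game -> bool) * (game -> bool) :=
  let: Game xl xr := x in
  let fix lg (y : game) : bool * bool :=
    let: Game yl yr := y in
    ((* x <= y *)
     all (fun xL => ~~ (lege xL).2 y) xl && all (fun yR => ~~ (lg yR).2) yr,
     (* y <= x *)
     all (fun yL => ~~ (lg yL).1) yl && all (fun xR => ~~ (lege xR).1 y) xr)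
  in (fun y => (lg y).1, fun y => (lg y).2).

Definition game_le (x y : game) : bool := (lege x).1 y.
Definition game_lt (x y : game) : bool := game_le x y && ~~ game_le y x.
Definition game_eq (x y : game) : Prop := game_le x y /\ game_le y x.

Fixpoint game_add (x : game) : game -> game :=
  let: Game xl xr := x in
  fix add_x (y : game) : game :=
    let: Game yl yr := y in
    Game ([seq game_add xL y | xL <- xl] ++ [seq add_x yL | yL <- yl])
         ([seq game_add xR y | xR <- xr] ++ [seq add_x yR | yR <- yr]).

Definition is_number (g : game) : bool :=
  all (fun gL => game_lt gL g) (lopts g) && all (fun gR => game_lt g gR) (ropts g).

Definition zero_game : game := Game [::] [::].
Fixpoint pos_game (n : nat) : game :=
  if n is n'.+1 then Game [:: pos_game n'] [::] else zero_game.
Fixpoint neg_game (n : nat) : game :=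
  if n is n'.+1 then Game [::] [:: neg_game n'] else zero_game.
Definition int_game (z : int) : game :=
  match z with Posz n => pos_game n | Negz n => neg_game n.+1 end.

(* dyad_game k p = canonical form of p / 2^k *)
Fixpoint dyad_game (k : nat) (p : int) : game :=
  if k is k'.+1 then
    if odd `|p|%N then
      Game [:: dyad_game k' ((p - 1) %/ 2)%Z] [:: dyad_game k' ((p + 1) %/ 2)%Z]
    else dyad_game k' (p %/ 2)%Z
  else int_game p.

Definition dyadic (q : rat) : Prop := exists k : nat, denq q = Posz (2 ^ k)%N.

(* canonical form of a dyadic rational q (denq q = 2^k, numq q/2^k reduced) *)
Definition canon (q : rat) : game := dyad_game (trunc_log 2 `|denq q|%N) (numq q).

Definition ball (m D : rat) : game :=
  Game [:: canon (m + D)%R] [:: canon (m - D)%R].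

Definition balanced (m D : rat) : Prop :=
  game_eq (game_add (ball m D) (ball m D)) (game_add (canon m) (canon m)).

(* Cancellation of doubling for numbers.  Suppose x + x <= y + y but not
   x <= y.  Then y <= x^L for some left option x^L of x (or dually
   y^R <= x), and x^L <= x because x is a number.  Monotonicity of the sum
   gives x + x <= y + y <= x^L + y <= x^L + x, but x^L + x is a left option
   of x + x, which cannot lie above it.  Applied in both directions to the
   balance equation <m;D> + <m;D> = m + m this yields <m;D> = m. *)

From HB Require Import structures.
From mathcomp Require Import all_boot all_order all_algebra zify.
Set Implicit Arguments. Unset Strict Implicit. Unset Printing Implicit Defensive.

Fixpoint tree_of_game (g : game) : GenTree.tree unit :=
  let: Game l r := g in
  GenTree.Node 0 [:: GenTree.Node 0 (map tree_of_game l);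
                     GenTree.Node 0 (map tree_of_game r)].

Fixpoint game_of_tree (t : GenTree.tree unit) : game :=
  if t is GenTree.Node _ [:: GenTree.Node _ l; GenTree.Node _ r]
  then Game (map game_of_tree l) (map game_of_tree r) else zero_game.

Fixpoint tree_of_gameK (g : game) : game_of_tree (tree_of_game g) = g :=
  let fix mapK s : map game_of_tree (map tree_of_game s) = s :=
    if s is a :: s' then f_equal2 cons (tree_of_gameK a) (mapK s') else erefl in
  let: Game l r := g in f_equal2 Game (mapK l) (mapK r).

HB.instance Definition _ := Equality.copy game (can_type tree_of_gameK).

Fixpoint gsize (g : game) : nat :=
  let: Game l r := g in (sumn (map gsize l) + sumn (map gsize r)).+1.

Lemma gsize_le_sumn (s : seq game) a : a \in s -> gsize a <= sumn (map gsize s).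
Proof. by elim: s => //= b s IHs; rewrite in_cons => /orP[/eqP->|/IHs]; lia. Qed.

Lemma gsize_lopt x a : a \in lopts x -> gsize a < gsize x.
Proof. by case: x => l r /= /gsize_le_sumn; lia. Qed.

Lemma gsize_ropt x b : b \in ropts x -> gsize b < gsize x.
Proof. by case: x => l r /= /gsize_le_sumn; lia. Qed.

Lemma lege_snd x y : (lege x).2 y = game_le y x.
Proof.
have [n] := ubnP (gsize x + gsize y); elim: n x y => // n IHn.
move=> [xl xr] [yl yr] size_lt; rewrite /game_le /=.
congr andb; apply: eq_in_all => a a_opt; congr negb.
- rewrite (IHn a (Game xl xr)) //.
  by have := gsize_lopt (a_opt : a \in lopts (Game yl yr)); rewrite /= in size_lt *; lia.
- have /= -> // := IHn (Game yl yr) a.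
  by have := gsize_ropt (a_opt : a \in ropts (Game xl xr)); rewrite /= in size_lt *; lia.
Qed.

Lemma game_leE x y : game_le x y =
  ~~ has (game_le y) (lopts x) && ~~ has (game_le^~ x) (ropts y).
Proof.
case: x => xl xr; case: y => yl yr.
rewrite -!all_predC {1}/game_le /=; congr andb; apply: eq_in_all => a _ /=.
  by rewrite lege_snd.
by rewrite -lege_snd.
Qed.

Lemma game_le_lopt x y a : game_le x y -> a \in lopts x -> ~~ game_le y a.
Proof. by rewrite game_leE => /andP[/hasPn] + _; apply. Qed.

Lemma game_le_ropt x y b : game_le x y -> b \in ropts y -> ~~ game_le b x.
Proof. by rewrite game_leE => /andP[_ /hasPn]; apply. Qed.

Lemma game_nleP x y : ~~ game_le x y ->
  (exists2 a, a \in lopts x & game_le y a) \/ (exists2 b, b \in ropts y & game_le b x).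
Proof. by rewrite game_leE negb_and !negbK => /orP[/hasP|/hasP]; [left|right]. Qed.

Lemma game_le_refl x : game_le x x.
Proof.
have [n] := ubnP (gsize x); elim: n x => // n IHn x size_lt.
rewrite game_leE; apply/andP; split; apply/hasPn => a a_opt; apply/negP => le_xa.
- have := game_le_lopt le_xa a_opt; rewrite IHn //.
  by have := gsize_lopt a_opt; lia.
- have := game_le_ropt le_xa a_opt; rewrite IHn //.
  by have := gsize_ropt a_opt; lia.
Qed.

Lemma game_nle_lopt x a : a \in lopts x -> ~~ game_le x a.
Proof. exact: game_le_lopt (game_le_refl x). Qed.

Lemma game_nle_ropt x b : b \in ropts x -> ~~ game_le b x.
Proof. exact: game_le_ropt (game_le_refl x). Qed.

Lemma game_le_trans y x z : game_le x y -> game_le y z -> game_le x z.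
Proof.
have [n] := ubnP (gsize x + gsize y + gsize z); elim: n x y z => // n IHn.
move=> x y z size_lt le_xy le_yz.
rewrite game_leE; apply/andP; split; apply/hasPn => a a_opt; apply/negP => le_a.
- have := game_le_lopt le_xy a_opt; rewrite (IHn y z a) //.
  by have := gsize_lopt a_opt; lia.
- have := game_le_ropt le_yz a_opt; rewrite (IHn a x y) //.
  by have := gsize_ropt a_opt; lia.
Qed.

Lemma lopts_add x y : lopts (game_add x y) =
  [seq game_add a y | a <- lopts x] ++ [seq game_add x a | a <- lopts y].
Proof. by case: x; case: y. Qed.

Lemma ropts_add x y : ropts (game_add x y) =
  [seq game_add b y | b <- ropts x] ++ [seq game_add x b | b <- ropts y].
Proof. by case: x; case: y. Qed.

Lemma lopt_addl x y a : a \in lopts x -> game_add a y \in lopts (game_add x y).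
Proof. by move=> a_opt; rewrite lopts_add mem_cat (map_f (game_add^~ y)). Qed.

Lemma lopt_addr x y a : a \in lopts y -> game_add x a \in lopts (game_add x y).
Proof. by move=> a_opt; rewrite lopts_add mem_cat (map_f (game_add x)) ?orbT. Qed.

Lemma ropt_addl x y b : b \in ropts x -> game_add b y \in ropts (game_add x y).
Proof. by move=> b_opt; rewrite ropts_add mem_cat (map_f (game_add^~ y)). Qed.

Lemma ropt_addr x y b : b \in ropts y -> game_add x b \in ropts (game_add x y).
Proof. by move=> b_opt; rewrite ropts_add mem_cat (map_f (game_add x)) ?orbT. Qed.

Lemma game_le_lopt_trans w c u :
  u \in lopts w -> game_le c u -> ~~ game_le w c.
Proof.
move=> u_opt le_cu; apply: contraNN (game_nle_lopt u_opt) => le_wc.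
exact: game_le_trans le_wc le_cu.
Qed.

Lemma game_le_ropt_trans w c u :
  u \in ropts w -> game_le u c -> ~~ game_le c w.
Proof.
move=> u_opt le_uc; apply: contraNN (game_nle_ropt u_opt) => le_cw.
exact: game_le_trans le_uc le_cw.
Qed.

Lemma game_add_comm_le x y : game_le (game_add x y) (game_add y x).
Proof.
have [n] := ubnP (gsize x + gsize y); elim: n x y => // n IHn x y size_lt.
rewrite game_leE; apply/andP; split; apply/hasPn => c.
- rewrite lopts_add mem_cat => /orP[] /mapP[a a_opt ->].
  + apply: (game_le_lopt_trans (lopt_addr y a_opt)); apply: IHn.
    by have := gsize_lopt a_opt; lia.
  + apply: (game_le_lopt_trans (lopt_addl x a_opt)); apply: IHn.
    by have := gsize_lopt a_opt; lia.
- rewrite ropts_add mem_cat => /orP[] /mapP[b b_opt ->].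
  + apply: (game_le_ropt_trans (ropt_addr x b_opt)); apply: IHn.
    by have := gsize_ropt b_opt; lia.
  + apply: (game_le_ropt_trans (ropt_addl y b_opt)); apply: IHn.
    by have := gsize_ropt b_opt; lia.
Qed.

Lemma game_leD2r x y z : game_le x y -> game_le (game_add x z) (game_add y z).
Proof.
have [n] := ubnP (gsize x + gsize y + gsize z); elim: n x y z => // n IHn.
move=> x y z size_lt le_xy.
rewrite game_leE; apply/andP; split; apply/hasPn => c.
- rewrite lopts_add mem_cat => /orP[] /mapP[a a_opt ->].
  + case: (game_nleP (game_le_lopt le_xy a_opt)) => [[a' a'_opt le_aa'] | [b b_opt le_by]].
    * apply: (game_le_lopt_trans (lopt_addl z a'_opt)); apply: IHn le_aa'.
      by have := gsize_lopt a_opt; have := gsize_lopt a'_opt; lia.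
    * apply: contraNN (game_nle_ropt (ropt_addl z b_opt)) => le_yza.
      apply: game_le_trans le_yza; apply: IHn le_by.
      by have := gsize_lopt a_opt; have := gsize_ropt b_opt; lia.
  + apply: (game_le_lopt_trans (lopt_addr y a_opt)); apply: IHn le_xy.
    by have := gsize_lopt a_opt; lia.
- rewrite ropts_add mem_cat => /orP[] /mapP[b b_opt ->].
  + case: (game_nleP (game_le_ropt le_xy b_opt)) => [[a a_opt le_xa] | [b' b'_opt le_b'b]].
    * apply: contraNN (game_nle_lopt (lopt_addl z a_opt)) => le_bzx.
      apply: game_le_trans le_bzx _; apply: IHn le_xa.
      by have := gsize_ropt b_opt; have := gsize_lopt a_opt; lia.
    * apply: (game_le_ropt_trans (ropt_addl z b'_opt)); apply: IHn le_b'b.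
      by have := gsize_ropt b_opt; have := gsize_ropt b'_opt; lia.
  + apply: (game_le_ropt_trans (ropt_addr x b_opt)); apply: IHn le_xy.
    by have := gsize_ropt b_opt; lia.
Qed.

Lemma game_leD2l x y z : game_le x y -> game_le (game_add z x) (game_add z y).
Proof.
move=> le_xy; apply: game_le_trans (game_add_comm_le z x) _.
exact: game_le_trans (game_leD2r z le_xy) (game_add_comm_le y z).
Qed.

Lemma number_lopt_le x a : is_number x -> a \in lopts x -> game_le a x.
Proof. by case/andP=> /allP lt_lopt _ /lt_lopt /andP[]. Qed.

Lemma number_ropt_ge x b : is_number x -> b \in ropts x -> game_le x b.
Proof. by case/andP=> _ /allP lt_ropt /lt_ropt /andP[]. Qed.

Lemma number_double_le x y : is_number x -> is_number y ->
  game_le (game_add x x) (game_add y y) -> game_le x y.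
Proof.
move=> num_x num_y le_2x2y; apply: contraT => /game_nleP[[a a_opt le_ya] | [b b_opt le_bx]].
- have le_yx := game_le_trans le_ya (number_lopt_le num_x a_opt).
  have le_2x_ax : game_le (game_add x x) (game_add a x).
    apply: game_le_trans le_2x2y _; apply: game_le_trans (game_leD2r y le_ya) _.
    exact: game_leD2l le_yx.
  by have := game_nle_lopt (lopt_addl x a_opt); rewrite le_2x_ax.
- have le_yx := game_le_trans (number_ropt_ge num_y b_opt) le_bx.
  have le_yb_2y : game_le (game_add y b) (game_add y y).
    apply: game_le_trans _ le_2x2y; apply: game_le_trans (game_leD2l y le_bx) _.
    exact: game_leD2r le_yx.
  by have := game_nle_ropt (ropt_addr y b_opt); rewrite le_yb_2y.
Qed.

Lemma number_double_inj x y : is_number x -> is_number y ->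
  game_eq (game_add x x) (game_add y y) -> game_eq x y.
Proof.
by move=> num_x num_y [le_2x2y le_2y2x]; split; apply: number_double_le.
Qed.

Theorem lemma2p9 (m D : rat) :
  dyadic m -> dyadic D ->
  is_number (canon m) -> is_number (ball m D) ->
  balanced m D ->
  game_eq (ball m D) (canon m).
Proof. by move=> _ _ num_m num_ball; apply: number_double_inj. Qed.
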